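(* Let $A=\{a_1,\dots,a_k\}$ with $k\ge2$, and let $Z\subseteq A^+$ be a finite code of standard form. If $\gcd(|Z_{a_1}|,|Z_{a_2}|,\dots,|Z_{a_k}|)=1$, then $Z$ is not an alt-induced code.
   Context: $A^+$ is the set of non-empty words over $A$; $XY=\{xy:x\in X,y\in Y\}$; $|S|$ denotes cardinality. For $a\in A$, $Z_a$ is the set of words of $Z$ beginning with the letter $a$ (possibly empty, with $|Z_a|=0$). A code is a subset of $A^+$ in which every word has at most one factorization into its elements. A finite code $Z$ over $A$ (with $|A|\ge2$) is of standard form if every word of $Z$ has length at least $2$, it is not the case that all words of $Z$ begin with the same letter, and it is not the case that all words of $Z$ end with the same letter. For non-empty $X,Y\subseteq A^+$, $(X,Y)$ is an alternative code if $XY$ is a code and each element of $XY$ has exactly one factorization $xy$ with $x\in X,y\in Y$ (equivalently, no word admits two different similar alternative factorizations on $(X,Y)$). $Z$ is an alt-induced code if $Z=XY$ for some alternative code $(X,Y)$. *)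

(* Words over a finite alphabet A are [seq A]; sets of words
   are predicates [seq A -> Prop]; the finite code Z is a duplicate-free list. *)
From mathcomp Require Import all_boot.
Set Implicit Arguments. Unset Strict Implicit. Unset Printing Implicit Defensive.

Section Codes.
Variable A : finType.

Definition is_code (W : seq A -> Prop) : Prop :=
  (forall w, W w -> w <> [::]) /\
  forall s1 s2 : seq (seq A),
    (forall u, u \in s1 -> W u) -> (forall u, u \in s2 -> W u) ->
    flatten s1 = flatten s2 -> s1 = s2.

Definition concat_set (X Y : seq A -> Prop) (w : seq A) : Prop :=
  exists x y, [/\ X x, Y y & w = x ++ y].

Definition alternative_code (X Y : seq A -> Prop) : Prop :=
  [/\ (exists x, X x) /\ (exists y, Y y),
      (forall x, X x -> x <> [::]), (forall y, Y y -> y <> [::]),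
      is_code (concat_set X Y) &
      forall x1 y1 x2 y2, X x1 -> Y y1 -> X x2 -> Y y2 ->
        x1 ++ y1 = x2 ++ y2 -> x1 = x2 /\ y1 = y2].

Definition alt_induced (Z : seq A -> Prop) : Prop :=
  exists X Y : seq A -> Prop,
    alternative_code X Y /\ forall w, Z w <-> concat_set X Y w.

Definition standard_form (Z : seq (seq A)) : Prop :=
  [/\ (forall w, w \in Z -> 2 <= size w),
      ~ (exists a : A, forall w, w \in Z -> ohead w = Some a) &
      ~ (exists a : A, forall w, w \in Z -> ohead (rev w) = Some a)].

(* |Z_a| : number of words of Z beginning with letter a *)
Definition card_begin (Z : seq (seq A)) (a : A) : nat :=
  count (fun w => ohead w == Some a) Z.

End Codes.

(* If Z = XY with every word of Z factoring uniquely as xy, then the words of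
   Z beginning with a are exactly the products xy with x in X_a and y in Y, so
   |Z_a| = |X_a| |Y| and |Y| divides every |Z_a|. Coprimality forces Y = {y},
   and then every word of Z ends with the last letter of y, which a code of
   standard form forbids. *)
From mathcomp Require Import all_boot.
From Stdlib Require Import ClassicalEpsilon.
Set Implicit Arguments. Unset Strict Implicit. Unset Printing Implicit Defensive.

Lemma sub_seq_enum (T : eqType) (P : T -> Prop) (s : seq T) :
  (forall x, P x -> x \in s) -> exists2 t : seq T, uniq t & forall x, x \in t <-> P x.
Proof.
move=> sPs.
pose p x := if excluded_middle_informative (P x) then true else false.
have pP x : reflect (P x) (p x) by rewrite /p; case: excluded_middle_informative; constructor.
exists (filter p (undup s)); first by rewrite filter_uniq ?undup_uniq.
move=> x; rewrite mem_filter mem_undup; split; first by case/andP=> /pP.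
by move=> Px; rewrite sPs // andbT; apply/pP.
Qed.

Lemma dvdn_big_gcdn (I : finType) (F : I -> nat) d :
  (forall i, d %| F i) -> d %| \big[gcdn/0]_(i : I) F i.
Proof. by move=> dF; elim/big_ind: _ => // m n dm dn; rewrite dvdn_gcd dm dn. Qed.

Section AltInducedCode.

Variable A : finType.
Variables (Z : seq (seq A)) (X Y : seq A -> Prop).

Hypothesis uniqZ : uniq Z.
Hypothesis memZ : forall w, w \in Z <-> concat_set X Y w.
Hypotheses (X_inhabited : exists x, X x) (Y_inhabited : exists y, Y y).
Hypotheses (X_neq0 : forall x, X x -> x <> [::]) (Y_neq0 : forall y, Y y -> y <> [::]).
Hypothesis factorization_unique : forall x1 y1 x2 y2, X x1 -> Y y1 -> X x2 -> Y y2 ->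
  x1 ++ y1 = x2 ++ y2 -> x1 = x2 /\ y1 = y2.

(* X and Y are mere predicates; they are finite because their words are
   prefixes, resp. suffixes, of words of Z. *)
Let prefixes := [seq take n w | w <- Z, n <- iota 0 (size w).+1].
Let suffixes := [seq drop n w | w <- Z, n <- iota 0 (size w).+1].

Lemma prefix_mem_prefixes x y : x ++ y \in Z -> x \in prefixes.
Proof.
move=> xyZ; apply/allpairsPdep; exists (x ++ y), (size x); split=> //.
  by rewrite mem_iota /= ltnS size_cat leq_addr.
by rewrite take_size_cat.
Qed.

Lemma suffix_mem_suffixes x y : x ++ y \in Z -> y \in suffixes.
Proof.
move=> xyZ; apply/allpairsPdep; exists (x ++ y), (size x); split=> //.
  by rewrite mem_iota /= ltnS size_cat leq_addr.
by rewrite drop_size_cat.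
Qed.

Lemma concat_in_Z x y : X x -> Y y -> x ++ y \in Z.
Proof. by move=> Xx Yy; apply/memZ; exists x, y. Qed.

Lemma Y_enum : exists2 ys, uniq ys & forall y, y \in ys <-> Y y.
Proof.
apply: (@sub_seq_enum _ _ suffixes) => y Yy; have [x Xx] := X_inhabited.
exact: suffix_mem_suffixes (concat_in_Z Xx Yy).
Qed.

Lemma X_begin_enum a :
  exists2 xs, uniq xs & forall x, x \in xs <-> X x /\ ohead x = Some a.
Proof.
apply: (@sub_seq_enum _ _ prefixes) => x [Xx _]; have [y Yy] := Y_inhabited.
exact: prefix_mem_prefixes (concat_in_Z Xx Yy).
Qed.

Lemma ohead_cat_X x y : X x -> ohead (x ++ y) = ohead x.
Proof. by case: x => [/X_neq0 //|]. Qed.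

Lemma card_begin_concat a xs ys :
  uniq xs -> (forall x, x \in xs <-> X x /\ ohead x = Some a) ->
  uniq ys -> (forall y, y \in ys <-> Y y) ->
  card_begin Z a = size xs * size ys.
Proof.
move=> uxs xsP uys ysP; rewrite -(size_allpairs cat) /card_begin -size_filter.
apply/perm_size/uniq_perm; first exact: filter_uniq.
  apply: allpairs_uniq => // -[x1 y1] [x2 y2].
  move=> /allpairsP[[x1' y1'] [/= /xsP[Xx1 _] /ysP Yy1 [-> ->]]].
  move=> /allpairsP[[x2' y2'] [/= /xsP[Xx2 _] /ysP Yy2 [-> ->]]] /= E.
  by have [-> ->] := factorization_unique Xx1 Yy1 Xx2 Yy2 E.
move=> w; rewrite mem_filter; apply/andP/allpairsP.
  case=> /eqP wa /memZ[x [y [Xx Yy Ew]]]; exists (x, y); split=> //=; last exact/ysP.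
  by apply/xsP; rewrite -wa Ew ohead_cat_X.
case=> -[x y] [/= /xsP[Xx xa] /ysP Yy ->].
by rewrite ohead_cat_X // xa concat_in_Z.
Qed.

Lemma size_Y_enum_dvd_card_begin ys :
  uniq ys -> (forall y, y \in ys <-> Y y) -> forall a, size ys %| card_begin Z a.
Proof.
move=> uys ysP a; have [xs uxs xsP] := X_begin_enum a.
by rewrite (card_begin_concat uxs xsP uys ysP) dvdn_mull.
Qed.

Lemma singleton_Y_common_last y :
  (forall y', Y y' <-> y' = y) ->
  exists b, forall w, w \in Z -> ohead (rev w) = Some b.
Proof.
move=> Yy; have /Y_neq0 : Y y by apply/Yy.
case/lastP: y Yy => [//|y b] Yy _; exists b => w /memZ[x [y' [_ /Yy -> ->]]].
by rewrite rev_cat rev_rcons.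
Qed.

End AltInducedCode.

Theorem theoremT (A : finType) (Z : seq (seq A)) :
  1 < #|A| ->
  uniq Z ->
  is_code (fun w => w \in Z) ->
  standard_form Z ->
  \big[gcdn/0]_(a : A) card_begin Z a = 1 ->
  ~ alt_induced (fun w => w \in Z).
Proof.
move=> _ uniqZ _ [_ _ no_common_last] gcd1 [X [Y [[[Xinh Yinh] Xne Yne _ fact] memZ]]].
have [ys uys ysP] := Y_enum memZ Xinh.
have : size ys = 1.
  apply/eqP; rewrite -dvdn1 -gcd1; apply: dvdn_big_gcdn.
  exact: (size_Y_enum_dvd_card_begin uniqZ memZ Yinh Xne fact uys ysP).
case: ys uys ysP => [|y [|]] //= _ ysP _; apply/no_common_last.
apply: (singleton_Y_common_last (y := y) memZ Yne) => y'.
by rewrite -ysP inE; split=> [/eqP|->].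
Qed.
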